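(* Let $G$ be a (finite, simple) graph with at least one edge. Then $\mathrm{tw}(G) \le \mathrm{cocirc}(G)$, i.e. the treewidth of $G$ is at most its cocircumference.
   Context: A bond of a graph $G$ is an inclusion-wise minimal set of edges $F$ such that $G-F$ has more connected components than $G$. The cocircumference $\mathrm{cocirc}(G)$ of a graph with at least one edge is the maximum size of a bond of $G$. A tree-decomposition of $G$ is a family $\{X_u : u\in V(T)\}$ of subsets of $V(G)$ indexed by the nodes of a tree $T$ such that for every $x\in V(G)$ the nodes $u$ with $x\in X_u$ induce a non-empty subtree of $T$, and every edge $xy$ of $G$ satisfies $\{x,y\}\subseteq X_u$ for some $u$; its width is $\max_u |X_u|-1$, and the treewidth $\mathrm{tw}(G)$ is the minimum width of a tree-decomposition of $G$. *)

From mathcomp Require Import all_boot.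
Set Implicit Arguments. Unset Strict Implicit. Unset Printing Implicit Defensive.

Definition simple_graph (T : finType) (e : rel T) : Prop :=
  symmetric e /\ irreflexive e.

Definition edges (T : finType) (e : rel T) : {set {set T}} :=
  [set [set p.1; p.2] | p in [set p : T * T | e p.1 p.2]].

Definition del_edges (T : finType) (e : rel T) (F : {set {set T}}) : rel T :=
  [rel x y | e x y && ([set x; y] \notin F)].

Definition ncomp (T : finType) (r : rel T) : nat :=
  #|[set [set y | connect r x y] | x : T]|.

Definition disconnecting (T : finType) (e : rel T) (F : {set {set T}}) : bool :=
  (F \subset edges e) && (ncomp e < ncomp (del_edges e F)).

Definition is_bond (T : finType) (e : rel T) (F : {set {set T}}) : bool :=
  disconnecting e F &&
  [forall F' : {set {set T}}, (F' \proper F) ==> ~~ disconnecting e F'].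

Definition cocirc (T : finType) (e : rel T) : nat :=
  \max_(F : {set {set T}} | is_bond e F) #|F|.

(* A (finite) tree on node type U with adjacency t: nonempty, simple,
   connected, and acyclic (every edge is a bridge, i.e. deleting the edge
   uv leaves no u-v path). *)
Definition is_tree (U : finType) (t : rel U) : Prop :=
  (0 < #|U|) /\ simple_graph t /\
  (forall u v : U, connect t u v) /\
  (forall u v : U, t u v -> ~~ connect (del_edges t [set [set u; v]]) u v).

Definition tree_decomposition (T : finType) (e : rel T)
    (U : finType) (t : rel U) (X : U -> {set T}) : Prop :=
  is_tree t /\
  (forall x : T,
      (exists u : U, x \in X u) /\
      (forall u v : U, x \in X u -> x \in X v ->
         connect [rel a b | t a b && (x \in X a) && (x \in X b)] u v)) /\
  (forall x y : T, e x y -> exists u : U, (x \in X u) && (y \in X u)).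

(* Width of a tree-decomposition is at most k: max_u |X_u| - 1 <= k. *)
Definition width_le (U : finType) (T : finType) (X : U -> {set T}) (k : nat) : Prop :=
  forall u : U, #|X u| <= k.+1.

(* tw(G) <= k : some tree-decomposition of G has width at most k
   (tw is the minimum width, so this is exactly tw(G) <= k). *)
Definition treewidth_le (T : finType) (e : rel T) (k : nat) : Prop :=
  exists (U : finType) (t : rel U) (X : U -> {set T}),
    tree_decomposition e t X /\ width_le X k.

From mathcomp Require Import all_boot.
Set Implicit Arguments. Unset Strict Implicit. Unset Printing Implicit Defensive.

(* Number the vertices by a graph search: every vertex either has an earlier
   neighbour or reaches no earlier vertex at all (a new component starts).
   For a vertex c, let upper_comp c be the component of c among the vertices
   numbered at least as late as c, and boundary c the earlier vertices
   adjacent to it.  The bags are X_c = {c} + boundary c, and the tree joins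
   each c to its latest boundary vertex (or to the first vertex when the
   boundary is empty); the numbering strictly decreases towards that root.

   For the bags we
   prove the tree-decomposition axioms, and bound |boundary c| by the cut
   between upper_comp c and the rest of the component of c: both sides are
   connected (the rest thanks to the search numbering), so that cut is a
   bond with at least |boundary c| edges.  Hence every bag has at most
   cocirc + 1 vertices. *)

Section Connectivity.
Variable T : finType.
Implicit Types (r s : rel T) (S : {set T}).

Definition induced r S : rel T := [rel x y | r x y && (x \in S) && (y \in S)].

Lemma connect_mono r s : subrel r s -> subrel (connect r) (connect s).
Proof. by move=> rs; apply: connect_sub => x y /rs /connect1. Qed.

Lemma connect_forward (P : pred T) r x y :
  (forall u v, P u -> r u v -> P v) -> connect r x y -> P x -> P y.
Proof.
move=> stepP /connectP [q pth ->]; elim: q x pth => [|z q IH] x //=.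
by case/andP=> rxz pth Px; apply: IH pth (stepP _ _ Px rxz).
Qed.

Lemma set2C (x y : T) : [set x; y] = [set y; x].
Proof. by apply/setP=> z; rewrite !inE orbC. Qed.

Lemma del_edges_sym r F : symmetric r -> symmetric (del_edges r F).
Proof. by move=> sr x y; rewrite /del_edges /= sr set2C. Qed.

Lemma induced_sym r S : symmetric r -> symmetric (induced r S).
Proof. by move=> sr x y; rewrite /induced /= sr -!andbA; congr (_ && _); rewrite andbC. Qed.

Lemma induced_sub r S : subrel (induced r S) r.
Proof. by move=> x y /andP [/andP []]. Qed.

Lemma connect_in_reach r x y :
  connect r x y -> connect (induced r [set z | connect r x z]) x y.
Proof.
set R := induced _ _ => rxy.
apply: (connect_forward (P := connect R x)) rxy (connect0 _ _) => u v xu ruv.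
have rxu : connect r x u by apply: connect_mono xu; apply: induced_sub.
apply: connect_trans xu (connect1 _).
by rewrite /R /induced /= ruv !inE rxu (connect_trans rxu (connect1 ruv)).
Qed.

End Connectivity.

Section Components.
Variable T : finType.
Implicit Types (r s : rel T).

Lemma ncomp_eq r s : connect r =2 connect s -> ncomp r = ncomp s.
Proof.
move=> rs; rewrite /ncomp (eq_imset _ (g := fun x => [set y | connect s x y])) //.
by move=> x; apply/setP => z; rewrite !inE rs.
Qed.

(* Removing edges that separate two connected vertices creates new components:
   each class of the smaller relation s lies in a class of r, and the classes
   of x and y are merged by r. *)
Lemma ncomp_lt r s x y :
  connect_sym r -> subrel s r -> connect r x y -> ~~ connect s x y ->
  ncomp r < ncomp s.
Proof.
move=> sym_r sr rxy sxy; rewrite /ncomp.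
pose cls (q : rel T) z := [set w | connect q z w].
pose hull (Y : {set T}) := [set w | [exists y in Y, connect r y w]].
have hullE z : hull (cls s z) = cls r z.
  apply/setP=> w; rewrite !inE; apply/existsP/idP => [[u /andP []]|rzw].
    by rewrite inE => /(connect_mono sr); apply: connect_trans.
  by exists z; rewrite inE connect0.
have -> : [set cls r z | z : T] = hull @: [set cls s z | z : T].
  by rewrite -imset_comp; apply: eq_imset => z /=; rewrite hullE.
rewrite ltn_neqAle leq_imset_card andbT; apply/negP => /imset_injP hull_inj.
have clsxy : cls s x = cls s y.
  apply: hull_inj; rewrite ?imset_f // !hullE.
  by apply/setP => z; rewrite !inE (same_connect sym_r rxy).
by move/setP/(_ y): clsxy; rewrite !inE connect0 (negbTE sxy).
Qed.

End Components.

Definition connected_in (T : finType) (e : rel T) (S : {set T}) : Prop :=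
  forall x y, x \in S -> y \in S -> connect (induced e S) x y.

Section Cuts.
Variables (T : finType) (e : rel T).
Hypothesis sym_e : symmetric e.

Definition cut (A B : {set T}) : {set {set T}} :=
  [set f : {set T} | [exists a in A, exists b in B, e a b && (f == [set a; b])]].

Lemma cutP (A B : {set T}) f :
  reflect (exists a b, [/\ a \in A, b \in B, e a b & f = [set a; b]]) (f \in cut A B).
Proof.
rewrite inE; apply: (iffP existsP).
  case=> a /andP [aA /existsP [b /andP [bB /andP [eab /eqP ->]]]].
  by exists a, b.
case=> a [b [aA bB eab ->]]; exists a; rewrite aA; apply/existsP; exists b.
by rewrite bB eab eqxx.
Qed.

Lemma cut_edges (A B : {set T}) : cut A B \subset edges e.
Proof.
apply/subsetP => f /cutP [a [b [_ _ eab ->]]].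
by apply/imsetP; exists (a, b); rewrite ?inE.
Qed.

Variables A B : {set T}.
Hypothesis disjAB : [disjoint A & B].
Hypothesis closedAB : forall x y, e x y -> x \in A :|: B -> y \in A :|: B.

Lemma cut_within S u w :
  (S = A \/ S = B) -> u \in S -> w \in S -> [set u; w] \notin cut A B.
Proof.
move=> S_AB uS wS; apply/negP => /cutP [a [b [aA bB _ uwab]]].
have /set2P ainS : a \in [set u; w] by rewrite uwab set21.
have /set2P binS : b \in [set u; w] by rewrite uwab set22.
have aS : a \in S by case: ainS => ->.
have bS : b \in S by case: binS => ->.
case: S_AB => SE; rewrite SE in aS bS.
  by rewrite (disjointFr disjAB bS) in bB.
by rewrite (disjointFl disjAB aS) in aA.
Qed.

Lemma cut_separates a b : a \in A -> b \in B -> ~~ connect (del_edges e (cut A B)) a b.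
Proof.
move=> aA bB; apply/negP => ab.
suff bA : b \in A by rewrite (disjointFr disjAB bA) in bB.
apply: (connect_forward (P := fun z => z \in A)) ab aA => u v uA /andP [euv uv_cut].
have: v \in A :|: B by apply: closedAB euv _; rewrite inE uA.
case/setUP => // vB; move: uv_cut; apply: contraNT => _.
by apply/cutP; exists u, v.
Qed.

Lemma cut_disconnecting a b :
  a \in A -> b \in B -> e a b -> disconnecting e (cut A B).
Proof.
move=> aA bB eab; rewrite /disconnecting cut_edges.
apply: (ncomp_lt (x := a) (y := b)) (connect1 eab) (cut_separates aA bB).
- exact: sym_connect_sym.
- by move=> x y /andP [].
Qed.

Hypotheses (connA : connected_in e A) (connB : connected_in e B).

(* Keeping a single cut edge reconnects A and B. *)
Lemma cut_minimal (F : {set {set T}}) : F \proper cut A B -> ~~ disconnecting e F.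
Proof.
case/properP => sub_F [f0 /cutP [a0 [b0 [a0A b0B eab0 ->]]] f0F].
set s := del_edges e F.
have keep S : S = A \/ S = B -> subrel (induced e S) s.
  move=> S_AB u w /andP [/andP [euw uS] wS]; rewrite /s /del_edges /= euw /=.
  by apply: contra (cut_within S_AB uS wS); apply: (subsetP sub_F).
have keepA := keep A (or_introl erefl); have keepB := keep B (or_intror erefl).
have connAB x y : x \in A :|: B -> y \in A :|: B -> connect s x y.
  have toa0 z : z \in A :|: B -> connect s z a0.
    case/setUP => [zA|zB]; first exact: (connect_mono keepA (connA zA a0A)).
    apply: (connect_trans (connect_mono keepB (connB zB b0B))).
    by apply: connect1; rewrite /s /del_edges /= sym_e eab0 set2C f0F.
  move=> xAB yAB; apply: connect_trans (toa0 _ xAB) _.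
  by rewrite (sym_connect_sym (del_edges_sym _ sym_e)) toa0.
rewrite /disconnecting negb_and -leqNgt (ncomp_eq (s := e)) ?leqnn ?orbT //.
move=> x y; apply/idP/idP; first by apply: connect_mono => u w /andP [].
apply: connect_sub => u w euw.
case uwF: ([set u; w] \in F); last by apply: connect1; rewrite /s /del_edges /= euw uwF.
have /cutP [a [b [aA bB _ uwab]]] := subsetP sub_F _ uwF.
have inAB z : z \in [set a; b] -> z \in A :|: B.
  by case/set2P => ->; rewrite inE ?aA ?bB ?orbT.
by apply: connAB; apply: inAB; rewrite -uwab ?set21 ?set22.
Qed.

Lemma cut_is_bond a b : a \in A -> b \in B -> e a b -> is_bond e (cut A B).
Proof.
move=> aA bB eab; rewrite /is_bond (cut_disconnecting aA bB eab).
by apply/forallP => F; apply/implyP; apply: cut_minimal.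
Qed.

End Cuts.

Section SearchOrder.
Variables (T : finType) (e : rel T).

(* pos numbers the vertices so that each vertex either has an earlier
   neighbour or reaches no earlier vertex at all, as in a graph search that
   starts a new component only when the current one is exhausted. *)
Definition search_order (pos : T -> nat) : Prop :=
  injective pos /\
  forall v, (exists2 w, e v w & pos w < pos v) \/
            (forall w, pos w < pos v -> ~~ connect e v w).

Definition search_order_on (P : {set T}) (pos : T -> nat) : Prop :=
  [/\ {in P &, injective pos}, forall v, v \in P -> pos v < #|P| &
      forall v, v \in P ->
        (exists2 w, w \in P & e v w /\ pos w < pos v) \/
        (forall w, w \in P -> pos w < pos v -> ~~ connect e v w)].

Lemma next_search_vertex (P : {set T}) : P != setT ->
  exists2 v, v \notin P &
    (exists2 w, w \in P & e v w) \/ (forall w, w \in P -> ~~ connect e v w).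
Proof.
rewrite -properT => /properP [_ [v0 _ v0P]].
case: (pickP [pred v | (v \notin P) && [exists w in P, e v w]]) => [v | none].
  by case/andP => vP /existsP [w /andP [wP evw]]; exists v => //; left; exists w.
exists v0 => //; right => w wP; apply/negP => v0w.
suff : w \notin P by rewrite wP.
apply: (connect_forward (P := fun z => z \notin P)) v0w v0P => u u' uP euu'.
apply/negP => u'P; move: (none u); rewrite /= uP /=.
by move/negbT/existsPn/(_ u'); rewrite u'P euu'.
Qed.

Lemma extend_search_order (P : {set T}) pos v :
  search_order_on P pos -> v \notin P ->
  (exists2 w, w \in P & e v w) \/ (forall w, w \in P -> ~~ connect e v w) ->
  search_order_on (v |: P) (fun x => if x == v then #|P| else pos x).
Proof.
move=> [inj bound ord] vP v_new; rewrite /search_order_on cardsU1 vP add1n.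
have neq_v x : x \in P -> x != v by apply: contraTneq => ->.
split.
- move=> x y /setU1P [-> | xP] /setU1P [-> | yP]; rewrite ?eqxx ?(negbTE (neq_v _ _)) //.
  + by move=> E; move: (bound _ yP); rewrite -E ltnn.
  + by move=> E; move: (bound _ xP); rewrite E ltnn.
  + exact: inj.
- by move=> x /setU1P [-> | xP]; rewrite ?eqxx // (negbTE (neq_v _ xP)) ltnS ltnW ?bound.
move=> x /setU1P [-> | xP].
  rewrite eqxx; case: v_new => [[w wP evw] | unreach].
    by left; exists w; rewrite ?inE ?wP ?orbT // (negbTE (neq_v _ wP)) bound.
  right => w /setU1P [-> | wP]; first by rewrite eqxx ltnn.
  by rewrite (negbTE (neq_v _ wP)) => _; apply: unreach.
rewrite (negbTE (neq_v _ xP)); case: (ord _ xP) => [[w wP [exw lt]] | first].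
  by left; exists w; rewrite ?inE ?wP ?orbT // (negbTE (neq_v _ wP)).
right => w /setU1P [-> | wP]; first by rewrite eqxx => /(ltn_trans (bound _ xP)); rewrite ltnn.
by rewrite (negbTE (neq_v _ wP)); apply: first.
Qed.

Lemma search_order_exists : exists pos, search_order pos.
Proof.
have grow k : k <= #|T| ->
    exists (P : {set T}) (pos : T -> nat), #|P| = k /\ search_order_on P pos.
  elim: k => [_ | k IH ltkT].
    exists set0, (fun _ => 0); rewrite cards0; split => //.
    by split => [x y | v | v]; rewrite inE.
  have [P [pos [cardP ord]]] := IH (ltnW ltkT).
  have PT : P != setT by apply: contraTneq ltkT => PT; rewrite -cardsT -PT cardP ltnn.
  have [v vP v_new] := next_search_vertex PT.
  exists (v |: P), (fun x => if x == v then #|P| else pos x); split.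
    by rewrite cardsU1 vP cardP.
  exact: extend_search_order.
have [P [pos [cardP]]] := grow #|T| (leqnn _); case=> inj _ ord.
have PT : P = setT by apply/eqP; rewrite eqEcard subsetT cardsT cardP leqnn.
rewrite {}PT in inj ord; exists pos; split.
  by move=> x y; apply: inj; rewrite inE.
move=> v; case: (ord v (in_setT v)) => [[w _ [evw lt]] | first]; first by left; exists w.
by right => w; apply: first; rewrite inE.
Qed.

End SearchOrder.

Section ParentTree.
Variables (U : finType) (p : U -> U) (rank : U -> nat) (root : U).
Hypothesis p_root : p root = root.
Hypothesis rank_p : forall u, u != root -> rank (p u) < rank u.

Definition parent_graph : rel U := [rel a b | (a != b) && ((p a == b) || (p b == a))].

Lemma parent_graph_sym : symmetric parent_graph.
Proof. by move=> a b; rewrite /parent_graph /= eq_sym orbC. Qed.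

Lemma connect_root u : connect parent_graph u root.
Proof.
elim: {u}(rank u).+1 {-2}u (ltnSn (rank u)) => // n IH u rank_u.
have [-> | u_root] := eqVneq u root; first exact: connect0.
have lt_pu := rank_p u_root.
apply: connect_trans (IH _ (leq_trans lt_pu rank_u)).
apply: connect1; rewrite /parent_graph /= eqxx andbT.
by apply: contraTneq lt_pu => <-; rewrite ltnn.
Qed.

Lemma ancestor_rank w u : connect (frel p) w u -> rank u <= rank w.
Proof.
move=> wu; apply: (connect_forward (P := fun z => rank z <= rank w)) wu (leqnn _).
move=> a b le_aw /eqP <-; apply: leq_trans le_aw.
by have [-> | /rank_p/ltnW] := eqVneq a root; rewrite ?p_root.
Qed.

Lemma ancestor_step w u : connect (frel p) w u -> w != u -> connect (frel p) (p w) u.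
Proof.
case/connectP => [[|x s] /= pth -> //]; first by rewrite eqxx.
by case/andP: pth => /eqP <- pth _; apply/connectP; exists s.
Qed.

(* Removing the edge between u and its parent leaves only descendants of u
   reachable from u, and the parent is not one of them. *)
Lemma parent_edge_bridge u :
  u != p u -> ~~ connect (del_edges parent_graph [set [set u; p u]]) u (p u).
Proof.
move=> u_pu; apply/negP => path_u.
have : connect (frel p) (p u) u.
  apply: (connect_forward (P := fun z => connect (frel p) z u)) path_u (connect0 _ _).
  move=> a b au /andP [/andP [_ /orP [/eqP pa | /eqP pb]] b_del].
    rewrite -pa; apply: ancestor_step au _.
    by apply: contraNneq b_del => a_u; rewrite -pa a_u inE.
  by apply: connect_trans au; apply: connect1; rewrite /= pb.
move/ancestor_rank; rewrite leqNgt rank_p //.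
by apply: contraNneq u_pu => ->; rewrite p_root.
Qed.

Lemma parent_tree : is_tree parent_graph.
Proof.
split; first by apply/card_gt0P; exists root.
split; first by split; [exact: parent_graph_sym | move=> a; rewrite /parent_graph /= eqxx].
split.
  move=> u v; apply: connect_trans (connect_root u) _.
  by rewrite (sym_connect_sym parent_graph_sym) connect_root.
move=> u v /andP [uv /orP [] /eqP E]; first by rewrite -E parent_edge_bridge // E.
rewrite -E (sym_connect_sym (del_edges_sym _ parent_graph_sym)) set2C.
by apply: parent_edge_bridge; rewrite E eq_sym.
Qed.

End ParentTree.

Section Decomposition.
Variables (T : finType) (e : rel T).
Hypotheses (sym_e : symmetric e) (irr_e : irreflexive e).
Variable pos : T -> nat.
Hypothesis pos_search : search_order e pos.
Variable v0 : T.

Let pos_inj : injective pos := pos_search.1.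

Definition upper_comp (c : T) : {set T} :=
  [set w | connect (induced e [set z | pos c <= pos z]) c w].

Definition boundary (c : T) : {set T} :=
  [set w | (w \notin upper_comp c) && [exists u in upper_comp c, e w u]].

Definition bag (c : T) : {set T} := c |: boundary c.

Lemma upper_comp_self c : c \in upper_comp c.
Proof. by rewrite inE connect0. Qed.

Lemma upper_comp_pos c w : w \in upper_comp c -> pos c <= pos w.
Proof.
rewrite inE => /(connect_forward (P := fun z => pos c <= pos z)); apply=> //.
by move=> u v _ /andP [_]; rewrite inE.
Qed.

Lemma upper_comp_closed c w u :
  pos c <= pos w -> u \in upper_comp c -> e w u -> w \in upper_comp c.
Proof.
move=> le_cw uC ewu; rewrite inE; apply: connect_trans (_ : connect _ c u) _.
  by move: uC; rewrite inE.
by apply: connect1; rewrite /induced /= sym_e ewu !inE le_cw (upper_comp_pos uC).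
Qed.

Lemma boundary_lt c w : w \in boundary c -> pos w < pos c.
Proof.
rewrite inE => /andP [wC /existsP [u /andP [uC ewu]]].
by rewrite ltnNge; apply: contra wC => le_cw; apply: upper_comp_closed uC ewu.
Qed.

(* A boundary vertex w of d is adjacent to upper_comp d and numbered before
   all of it, so upper_comp d lies in upper_comp w. *)
Lemma upper_comp_boundary d w :
  w \in boundary d -> {subset upper_comp d <= upper_comp w}.
Proof.
move=> wN z zC; have lt_wd := boundary_lt wN.
have mono : subrel (induced e [set z | pos d <= pos z])
                   (induced e [set z | pos w <= pos z]).
  move=> a b /andP [/andP [eab aL] bL]; rewrite /induced /= eab !inE.
  by move: aL bL; rewrite !inE => aL bL; rewrite !(leq_trans (ltnW lt_wd)).
move: wN; rewrite !inE => /andP [_ /existsP [u /andP [uC ewu]]].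
apply: (@connect_trans _ _ u).
  apply: connect1; rewrite /induced /= ewu !inE leqnn /=.
  exact: leq_trans (ltnW lt_wd) (upper_comp_pos uC).
apply: (@connect_trans _ _ d).
  rewrite (sym_connect_sym (induced_sym _ sym_e)).
  by move: uC; rewrite inE; apply: connect_mono.
by move: zC; rewrite inE; apply: connect_mono.
Qed.

Definition first_vertex : T := [arg min_(w < v0) pos w].

Definition parent (c : T) : T :=
  if [pick w in boundary c] is Some w0 then [arg max_(w > w0 in boundary c) pos w]
  else first_vertex.

Lemma first_vertex_min w : pos first_vertex <= pos w.
Proof. by rewrite /first_vertex; case: arg_minnP => // x _; apply. Qed.

Lemma parent_boundary c w :
  w \in boundary c -> parent c \in boundary c /\ pos w <= pos (parent c).
Proof.
move=> wN; rewrite /parent; case: pickP => [w0 w0N | none]; last by rewrite none in wN.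
by case: arg_maxnP => // x xN max_x; split; last exact: max_x.
Qed.

Lemma parent_first : parent first_vertex = first_vertex.
Proof.
rewrite /parent; case: pickP => // w wN.
by move: (boundary_lt wN); rewrite ltnNge first_vertex_min.
Qed.

Lemma parent_lt c : c != first_vertex -> pos (parent c) < pos c.
Proof.
move=> c_first; rewrite /parent; case: pickP => [w0 w0N | _].
  by case: arg_maxnP => // x xN _; apply: boundary_lt.
rewrite ltn_neqAle first_vertex_min andbT.
by apply: contra c_first => /eqP/pos_inj ->.
Qed.

Definition tree : rel T := parent_graph parent.

(* The bags containing x form a subtree: going up from a bag containing x
   towards the parent keeps x until the bag of x itself is reached. *)
Lemma bag_subtree x d :
  x \in bag d -> connect [rel a b | tree a b && (x \in bag a) && (x \in bag b)] d x.
Proof.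
elim: {d}(pos d).+1 {-2}d (ltnSn (pos d)) => // n IH d lt_dn.
rewrite /bag in_setU1 => /orP [/eqP -> | xN]; first exact: connect0.
have [pN le_xp] := parent_boundary xN.
have lt_pd := boundary_lt pN.
have x_bag_p : x \in bag (parent d).
  have [<- | px] := eqVneq (parent d) x; first exact: setU11.
  have lt_xp : pos x < pos (parent d).
    by rewrite ltn_neqAle le_xp andbT; apply: contra px => /eqP/pos_inj ->.
  rewrite /bag in_setU1 inE; apply/orP; right.
  move: xN; rewrite inE => /andP [_ /existsP [u /andP [uC exu]]].
  apply/andP; split.
    by apply: contraTN lt_xp => /upper_comp_pos; rewrite -leqNgt.
  by apply/existsP; exists u; rewrite exu (upper_comp_boundary pN uC).
apply: connect_trans (IH _ (leq_trans lt_pd lt_dn) x_bag_p).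
apply: connect1; rewrite /= x_bag_p andbT /bag in_setU1 xN orbT andbT.
rewrite /tree /parent_graph /= eqxx andbT.
by apply: contraTneq lt_pd => E; rewrite -E ltnn.
Qed.

(* Every edge lies in the bag of its later endpoint. *)
Lemma bag_edge x y : e x y -> exists u, (x \in bag u) && (y \in bag u).
Proof.
wlog lt_xy : x y / pos x < pos y.
  move=> W exy; case: (ltngtP (pos x) (pos y)) => [lt_xy | lt_yx | /pos_inj eq_xy].
  - exact: W lt_xy exy.
  - have eyx : e y x by rewrite sym_e.
    by have [u] := W y x lt_yx eyx; exists u; rewrite andbC.
  - by rewrite eq_xy irr_e in exy.
move=> exy; exists y; rewrite /bag setU11 andbT in_setU1 inE; apply/orP; right.
apply/andP; split; first by apply: contraTN lt_xy => /upper_comp_pos; rewrite -leqNgt.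
by apply/existsP; exists y; rewrite upper_comp_self exy.
Qed.

Lemma bags_tree_decomposition : tree_decomposition e tree bag.
Proof.
split.
  exact: (parent_tree parent_first parent_lt).
split; last exact: bag_edge.
move=> x; split; first by exists x; apply: setU11.
move=> u v xu xv; apply: connect_trans (bag_subtree xu) _.
rewrite (sym_connect_sym _); first exact: bag_subtree.
move=> a b; rewrite /= /tree (parent_graph_sym parent a b).
by case: (x \in bag a); case: (x \in bag b); rewrite ?andbF ?andbT.
Qed.

Definition comp (c : T) : {set T} := [set w | connect e c w].

Definition rest (c : T) : {set T} := comp c :\: upper_comp c.

Lemma upper_comp_connected c : connected_in e (upper_comp c).
Proof.
have from_c w : w \in upper_comp c -> connect (induced e (upper_comp c)) c w.
  rewrite inE => /connect_in_reach; apply: connect_mono => a b.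
  by rewrite /induced /= -!andbA => /and4P [-> _ _ /andP [-> ->]].
move=> x y xC yC; apply: connect_trans (from_c _ yC).
by rewrite (sym_connect_sym (induced_sym _ sym_e)) from_c.
Qed.

Lemma upper_comp_comp c : upper_comp c \subset comp c.
Proof. by apply/subsetP => w; rewrite !inE; apply: connect_mono; apply: induced_sub. Qed.

Lemma rest_upper_comp c : rest c :|: upper_comp c = comp c.
Proof. by rewrite /rest setUC -{1}(setIidPr (upper_comp_comp c)) setID. Qed.

Lemma boundary_rest c w : w \in boundary c -> w \in rest c.
Proof.
rewrite inE => /andP [wC /existsP [u /andP [uC ewu]]].
rewrite inE wC inE; apply: connect_trans (connect1 (_ : e u w)); last by rewrite sym_e.
by move/(subsetP (upper_comp_comp c)): uC; rewrite inE.
Qed.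

(* The search order walks every vertex of rest c down, inside rest c, to the
   first vertex of the component. *)
Lemma rest_connected c : connected_in e (rest c).
Proof.
have comp_c : c \in comp c by rewrite inE connect0.
pose m := [arg min_(w < c in comp c) pos w].
have [m_comp m_min] : m \in comp c /\ forall w, w \in comp c -> pos m <= pos w.
  by rewrite /m; case: arg_minnP.
have to_m a : a \in rest c -> connect (induced e (rest c)) a m.
  elim: {a}(pos a).+1 {-2}a (ltnSn (pos a)) => // n IH a lt_an aR.
  have /andP [aC a_comp] : (a \notin upper_comp c) && (a \in comp c) by rewrite -in_setD.
  case: (pos_search.2 a) => [[w eaw lt_wa] | a_first].
    have w_comp : w \in comp c by rewrite inE (connect_trans _ (connect1 eaw)) // -inE.
    have wC : w \notin upper_comp c.
      apply: contra aC => wC; have le_cw := upper_comp_pos wC.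
      exact: upper_comp_closed (leq_trans le_cw (ltnW lt_wa)) wC eaw.
    have wR : w \in rest c by rewrite in_setD wC w_comp.
    apply: connect_trans (IH w (leq_trans lt_wa lt_an) wR).
    by apply: connect1; rewrite /induced /= eaw aR wR.
  have [lt_ma | lt_am | /pos_inj ->] := ltngtP (pos m) (pos a); last exact: connect0.
  - have : connect e a m.
      by move: a_comp m_comp; rewrite !inE => /(same_connect (sym_connect_sym sym_e)) ->.
    by rewrite (negbTE (a_first _ lt_ma)).
  - by move: (m_min _ a_comp); rewrite leqNgt lt_am.
move=> x y xR yR; apply: connect_trans (to_m _ xR) _.
by rewrite (sym_connect_sym (induced_sym _ sym_e)) to_m.
Qed.

(* Each boundary vertex is the rest-side end of some cut edge. *)
Lemma boundary_le_cut c : #|boundary c| <= #|cut e (rest c) (upper_comp c)|.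
Proof.
pose rest_end (f : {set T}) := odflt c [pick z in f :&: rest c].
apply: leq_trans (leq_imset_card rest_end _); apply: subset_leq_card.
apply/subsetP => w wN; have wR := boundary_rest wN.
move: wN; rewrite inE => /andP [_ /existsP [u /andP [uC ewu]]].
apply/imsetP; exists [set w; u]; first by apply/cutP; exists w, u.
rewrite /rest_end; case: pickP => [z | none]; last by move: (none w); rewrite inE set21 wR.
rewrite in_setI in_set2 => /andP [/orP [/eqP -> // | /eqP ->]].
by rewrite in_setD uC.
Qed.

(* The cut is a bond whenever the boundary is non-empty. *)
Lemma boundary_le_cocirc c : #|boundary c| <= cocirc e.
Proof.
have [-> | [w wN]] := set_0Vmem (boundary c); first by rewrite cards0.
move: (wN); rewrite inE => /andP [_ /existsP [u /andP [uC ewu]]].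
have disj : [disjoint rest c & upper_comp c].
  by rewrite -setI_eq0 /rest setDE -setIA [~: _ :&: _]setIC setICr setI0.
have comp_closed x y : e x y -> x \in rest c :|: upper_comp c -> y \in rest c :|: upper_comp c.
  rewrite rest_upper_comp !inE => exy cx.
  exact: connect_trans cx (connect1 exy).
have bond := cut_is_bond sym_e disj comp_closed (@rest_connected c) (@upper_comp_connected c)
  (boundary_rest wN) uC ewu.
exact: leq_trans (boundary_le_cut c) (leq_bigmax_cond _ bond).
Qed.

End Decomposition.

Theorem theorem1p3 (T : finType) (e : rel T) :
  simple_graph e -> (exists x y : T, e x y) ->
  treewidth_le e (cocirc e).
Proof.
move=> [sym_e irr_e] [v0 _].
have [pos pos_search] := search_order_exists e.
exists T, (tree e pos v0), (bag e pos); split.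
  exact: bags_tree_decomposition.
move=> c; rewrite /bag cardsU1 -add1n.
exact: leq_add (leq_b1 _) (boundary_le_cocirc sym_e pos_search c).
Qed.
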